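(* Each $p\in\mathcal P_{\underline b}$ has a unique decomposition $(q_1,\dots,q_b)$.
   Context: $I=[-1,1]$, $\underline b=(\ell_1,\dots,\ell_b)$ a vector of positive even integers. $\mathcal P_{\underline b}$ is the set of polynomials $p:I\to I$ of the form $p=q_b\circ\dots\circ q_1$, where each $q_i:I\to I$ satisfies $q_i(-1)=q_i(1)=-1$, $q_i(0)>0$ for $i\ne b$, and $q_i=A_i^{-1}\circ p_i\circ A_i$ with $p_i(z)=z^{\ell_i}+a_i$ a real polynomial having an invariant interval $J_i$ and $A_i:I\to J_i$ an affine bijection. Such a vector $(q_1,\dots,q_b)$ is called a decomposition of $p$. *)

From mathcomp Require Import all_boot all_order all_algebra.
From mathcomp Require Import reals.
Set Implicit Arguments. Unset Strict Implicit. Unset Printing Implicit Defensive.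
Import Order.TTheory GRing.Theory Num.Theory.
Local Open Scope ring_scope.

Section Defs.
Variable R : realType.

Definition inI (x : R) : Prop := -1 <= x <= 1.

(* q : I -> I is of the form A^{-1} o p_l o A, where p_l(z) = z^l + a has an
   invariant interval J = [c, d] and A : I -> J, A x = alpha x + beta, is an
   affine bijection.  q is a function R -> R considered only on I. *)
Definition unicrit_factor (l : nat) (q : R -> R) : Prop :=
  exists (a c d alpha beta : R),
    alpha != 0 /\
    (forall y, c <= y <= d <-> exists x, inI x /\ alpha * x + beta = y) /\
    (forall z, c <= z <= d -> c <= z ^+ l + a <= d) /\
    (forall x, inI x -> q x = (((alpha * x + beta) ^+ l + a) - beta) / alpha) /\
    (forall x, inI x -> inI (q x)).

(* compn q n = q_(n-1) o ... o q_0 (factors indexed from 0) *)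
Fixpoint compn (q : nat -> R -> R) (n : nat) (x : R) : R :=
  match n with
  | 0 => x
  | n'.+1 => q n' (compn q n' x)
  end.

(* (q_0, ..., q_(b-1)) is a decomposition of p for the degree vector ell
   (b = size ell; paper's q_(i+1) is q i here). *)
Definition is_decomposition (ell : seq nat) (p : R -> R) (q : nat -> R -> R)
    : Prop :=
  (forall i, (i < size ell)%N ->
     [/\ unicrit_factor (nth 0%N ell i) (q i),
         q i (-1) = -1, q i 1 = -1 &
         ((i.+1 < size ell)%N -> 0 < q i 0)]) /\
  (forall x, inI x -> p x = compn q (size ell) x).

Definition in_P (ell : seq nat) (p : R -> R) : Prop :=
  exists q, is_decomposition ell p q.

End Defs.

From mathcomp Require Import all_boot all_order all_algebra.
From mathcomp Require Import reals ring lra.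
Import Order.TTheory GRing.Theory Num.Theory.
Local Open Scope ring_scope.

Set Implicit Arguments.
Unset Strict Implicit.
Unset Printing Implicit Defensive.

(* Since q(-1) = q(1) = -1, the affine conjugacy in a unicritical factor is
   linear, so on I every factor is q(x) = a - (1 + a) x^l, where a = q(0) > -1 is
   its critical value; a decomposition is thus determined by its critical values.
   These are recovered from the outermost factor inwards.  Let Q_n, Q'_n be the
   compositions of the first n factors of two decompositions and suppose
   q_n o Q_n = q'_n o Q'_n on I.  The inner factors have a_i > 0, hence map
   [-1, 0] onto a superset of [-1, 0]; so Q_n vanishes somewhere on I, and there
   the left side equals a_n, which is at most the maximum a'_n of the right side.
   By symmetry a_n = a'_n, hence Q_n^l = Q'_n^l and Q_n^2 = Q'_n^2 on I.  As
   polynomials, (Q_n - Q'_n)(Q_n + Q'_n) = 0, and Q_n + Q'_n <> 0 because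
   Q_n(1) = Q'_n(1) = +-1. *)

Lemma sqr_eq_of_expr_eq (R : realDomainType) (l : nat) (x y : R) :
  (0 < l)%N -> x ^+ l = y ^+ l -> x ^+ 2 = y ^+ 2.
Proof.
move=> l_gt0 /(congr1 Num.norm) /eqP; rewrite !normrX eqrXn2 // => /eqP xy.
by rewrite -(real_normK (num_real x)) -(real_normK (num_real y)) xy.
Qed.

Section UnicritPoly.
Variable R : rcfType.

Definition unicrit_poly (a : R) (l : nat) : {poly R} := a%:P - (1 + a) *: 'X^l.

Lemma horner_unicrit_poly a l x : (unicrit_poly a l).[x] = a - (1 + a) * x ^+ l.
Proof. by rewrite !hornerE. Qed.

Lemma unicrit_poly_le a l x : ~~ odd l -> -1 <= a -> (unicrit_poly a l).[x] <= a.
Proof.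
move=> l_even a_ge; rewrite horner_unicrit_poly gerBl.
by rewrite mulr_ge0 ?exprn_even_ge0 //; lra.
Qed.

Lemma unicrit_poly_onto a l y : (0 < l)%N -> ~~ odd l -> -1 <= y <= a ->
  exists2 z, -1 <= z <= 0 & (unicrit_poly a l).[z] = y.
Proof.
move=> l_gt0 l_even /andP[y_ge y_le].
have [z z_range /rootP] : exists2 z, -1 <= z <= 0 & root (unicrit_poly a l - y%:P) z.
  apply: poly_ivt; first lra.
  rewrite !hornerE -signr_odd (negbTE l_even) expr0n eqn0Ngt l_gt0 /=; lra.
rewrite hornerD hornerN hornerC => /eqP; rewrite subr_eq0 => /eqP zy.
by exists z.
Qed.

End UnicritPoly.

Lemma inI0 {R : realType} : inI (0 : R). Proof. by apply/andP; split; lra. Qed.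
Lemma inI1 {R : realType} : inI (1 : R). Proof. by apply/andP; split; lra. Qed.
Lemma inIN1 {R : realType} : inI (-1 : R). Proof. by apply/andP; split; lra. Qed.

Lemma poly_eq_on_I (R : realType) (P P' : {poly R}) :
  (forall x, inI x -> P.[x] = P'.[x]) -> P = P'.
Proof.
move=> PP'; apply/eqP; rewrite -subr_eq0; apply/eqP.
pose rs := [seq (k.+1%:R : R)^-1 | k <- iota 0 (size (P - P'))].
apply: (@roots_geq_poly_eq0 _ _ rs); last by rewrite size_map size_iota.
  apply/allP => _ /mapP[k _ ->]; rewrite /root hornerD hornerN PP' ?subrr //.
  have k_gt0 : (0 : R) < k.+1%:R by rewrite ltr0n.
  apply/andP; split; last by rewrite invf_le1 // ler1n.
  by rewrite (le_trans (lerN10 _)) // invr_ge0 ltW.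
rewrite map_inj_uniq ?iota_uniq // => j k /invr_inj /eqP.
by rewrite eqr_nat eqSS => /eqP.
Qed.

Lemma unicrit_factor_normal_form (R : realType) (l : nat) (q : R -> R) :
  (0 < l)%N -> unicrit_factor l q -> q (-1) = -1 -> q 1 = -1 ->
  -1 < q 0 /\ forall x, inI x -> q x = (unicrit_poly (q 0) l).[x].
Proof.
move=> l_gt0 [a [_ [_ [al [be [al0 [_ [_ [qE qI]]]]]]]]] qN1 q1.
have be0 : be = 0.
  have := qE _ inI1; have := qE _ inIN1; rewrite q1 qN1 => ->.
  move=> /(mulIf (invr_neq0 al0)) /addIr /addIr /(sqr_eq_of_expr_eq l_gt0) albe.
  have /eqP : al * be = 0 by nra.
  by rewrite mulf_eq0 (negbTE al0) => /eqP.
pose k := al ^+ l / al.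
have k0 : k != 0 by rewrite mulf_neq0 ?invr_neq0 ?expf_neq0.
have qkE x : inI x -> q x = a / al + k * x ^+ l.
  by move=> xI; rewrite qE // be0 addr0 subr0 exprMn /k; field.
have q0E : q 0 = a / al.
  by rewrite (qkE _ inI0) expr0n eqn0Ngt l_gt0 mulr0 addr0.
have kE : k = - (1 + q 0).
  by have := qkE _ inI1; rewrite q1 q0E expr1n mulr1 => ?; lra.
split=> [|x xI]; last by rewrite qkE // horner_unicrit_poly q0E kE q0E; ring.
have /andP[q0_ge _] := qI _ inI0.
rewrite lt_neqAle q0_ge andbT; apply: contra k0 => /eqP q0N1.
by rewrite kE -q0N1 addrN oppr0.
Qed.

Section Decomposition.
Variables (R : realType) (ell : seq nat) (p : R -> R) (q : nat -> R -> R).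
Hypothesis ell_even :
  forall i, (i < size ell)%N -> (0 < nth 0%N ell i)%N /\ ~~ odd (nth 0%N ell i).
Hypothesis q_dec : is_decomposition ell p q.

Lemma decomposition_normal_form i : (i < size ell)%N ->
  -1 < q i 0 /\ forall x, inI x -> q i x = (unicrit_poly (q i 0) (nth 0%N ell i)).[x].
Proof.
move=> i_lt; have [l_gt0 _] := ell_even i_lt.
have [q_unicrit qN1 q1 _] := q_dec.1 i i_lt.
exact: unicrit_factor_normal_form.
Qed.

Lemma compn_inI n x : (n <= size ell)%N -> inI x -> inI (compn q n x).
Proof.
elim: n => [//|n IHn] n_le xI /=.
have [[_ [_ [_ [_ [_ [_ [_ [_ [_ qI]]]]]]]]] _ _ _] := q_dec.1 n n_le.
by apply: qI; apply: IHn => //; apply: ltnW.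
Qed.

Lemma compnS_unicrit_poly n x : (n < size ell)%N -> inI x ->
  compn q n.+1 x = (unicrit_poly (q n 0) (nth 0%N ell n)).[compn q n x].
Proof.
move=> n_lt xI; have [_ qE] := decomposition_normal_form n_lt.
by rewrite /= qE //; apply: compn_inI (ltnW n_lt) xI.
Qed.

Lemma compn_at1 n : (n <= size ell)%N -> compn q n 1 = if n is 0 then 1 else -1.
Proof.
elim: n => [//|n IHn] n_le /=.
have [_ qN1 q1 _] := q_dec.1 n n_le.
by rewrite IHn ?(ltnW n_le) //; case: n {IHn n_le} qN1 q1.
Qed.

Lemma compn_onto n y : (n < size ell)%N -> -1 <= y <= 0 ->
  exists2 x, inI x & compn q n x = y.
Proof.
elim: n y => [|n IHn] y n_lt /andP[y_ge y_le].
  by exists y => //; apply/andP; split; lra.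
have [l_gt0 l_even] := ell_even (ltnW n_lt).
have [_ _ _ /(_ n_lt) qn0_gt0] := q_dec.1 n (ltnW n_lt).
have [|z z_range qz] := @unicrit_poly_onto _ (q n 0) _ y l_gt0 l_even.
  by apply/andP; split; lra.
have [x xI qx] := IHn z (ltnW n_lt) z_range.
exists x => //; rewrite (compnS_unicrit_poly (ltnW n_lt) xI) qx; exact: qz.
Qed.

Fixpoint compn_poly n : {poly R} :=
  if n is n'.+1 then unicrit_poly (q n' 0) (nth 0%N ell n') \Po compn_poly n'
  else 'X.

Lemma compn_polyE n x : (n <= size ell)%N -> inI x ->
  compn q n x = (compn_poly n).[x].
Proof.
elim: n => [|n IHn] n_le xI; first by rewrite hornerX.
rewrite -[compn_poly n.+1]/(_ \Po compn_poly n) horner_comp -IHn ?(ltnW n_le) //.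
exact: compnS_unicrit_poly.
Qed.

End Decomposition.

Section Uniqueness.
Variables (R : realType) (ell : seq nat) (p p' : R -> R) (q q' : nat -> R -> R).
Hypothesis ell_even :
  forall i, (i < size ell)%N -> (0 < nth 0%N ell i)%N /\ ~~ odd (nth 0%N ell i).
Hypotheses (q_dec : is_decomposition ell p q) (q'_dec : is_decomposition ell p' q').

Lemma compn_eq_of_sqr n : (n <= size ell)%N ->
  (forall x, inI x -> compn q n x ^+ 2 = compn q' n x ^+ 2) ->
  forall x, inI x -> compn q n x = compn q' n x.
Proof.
move=> n_le sqr_eq.
pose P := compn_poly ell q n; pose P' := compn_poly ell q' n.
have PE x : inI x -> compn q n x = P.[x] := compn_polyE ell_even q_dec n_le.
have P'E x : inI x -> compn q' n x = P'.[x] := compn_polyE ell_even q'_dec n_le.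
have /eqP : (P - P') * (P + P') = 0.
  apply: poly_eq_on_I => x xI.
  rewrite -subr_sqr horner0 hornerD hornerN !horner_exp -PE -?P'E //.
  by rewrite sqr_eq // subrr.
rewrite mulf_eq0 => /orP[/eqP/subr0_eq PP' x xI | /eqP PP'0].
  by rewrite PE // P'E // PP'.
exfalso; have := congr1 (horner^~ 1) PP'0.
rewrite /= hornerD horner0 -(PE _ inI1) -(P'E _ inI1).
by rewrite (compn_at1 q_dec n_le) (compn_at1 q'_dec n_le); case: (n) => [|m]; lra.
Qed.

Lemma compnS_eq_cancel n : (n < size ell)%N ->
  (forall x, inI x -> compn q n.+1 x = compn q' n.+1 x) ->
  q n 0 = q' n 0 /\ forall x, inI x -> compn q n x = compn q' n x.
Proof.
move=> n_lt eqS; set l := nth 0%N ell n.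
have [l_gt0 l_even] := ell_even n_lt.
have [a_gt _] := decomposition_normal_form ell_even q_dec n_lt.
have [a'_gt _] := decomposition_normal_form ell_even q'_dec n_lt.
have unicrit_eq x : inI x ->
    (unicrit_poly (q n 0) l).[compn q n x] = (unicrit_poly (q' n 0) l).[compn q' n x].
  move=> xI; rewrite -(compnS_unicrit_poly ell_even q_dec n_lt xI).
  by rewrite -(compnS_unicrit_poly ell_even q'_dec n_lt xI) eqS.
have zero_range : -1 <= (0 : R) <= 0 by apply/andP; split; lra.
have [x x_I Qx] := compn_onto ell_even q_dec n_lt zero_range.
have [x' x'_I Q'x'] := compn_onto ell_even q'_dec n_lt zero_range.
have crit_value a : (unicrit_poly a l).[0] = a.
  by rewrite horner_unicrit_poly expr0n eqn0Ngt l_gt0 mulr0 subr0.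
have a_le : q n 0 <= q' n 0.
  have := unicrit_eq x x_I; rewrite Qx crit_value => ->.
  exact: unicrit_poly_le l_even (ltW a'_gt).
have a'_le : q' n 0 <= q n 0.
  have := unicrit_eq x' x'_I; rewrite Q'x' crit_value => <-.
  exact: unicrit_poly_le l_even (ltW a_gt).
have a_eq : q n 0 = q' n 0 by apply/eqP; rewrite eq_le a_le a'_le.
split=> //; apply: compn_eq_of_sqr (ltnW n_lt) _ => y yI.
have a1_neq0 : 1 + q n 0 != 0 by rewrite gt_eqF //; lra.
have := unicrit_eq y yI; rewrite !horner_unicrit_poly -a_eq.
by move=> /addrI /oppr_inj /(mulfI a1_neq0) /(sqr_eq_of_expr_eq l_gt0).
Qed.

Lemma compn_eq_crit_eq n : (n <= size ell)%N ->
  (forall x, inI x -> compn q n x = compn q' n x) ->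
  forall i, (i < n)%N -> q i 0 = q' i 0.
Proof.
elim: n => [//|n IHn] n_le eqS i; rewrite ltnS leq_eqVlt => /predU1P[-> | i_lt].
  exact: (compnS_eq_cancel n_le eqS).1.
exact: IHn (ltnW n_le) (compnS_eq_cancel n_le eqS).2 i i_lt.
Qed.

End Uniqueness.

Theorem lemma4p3 (R : realType) (ell : seq nat)
  (hell : forall i, (i < size ell)%N -> (0 < nth 0%N ell i)%N /\ ~~ odd (nth 0%N ell i))
  (p : R -> R) (q q' : nat -> R -> R) :
  is_decomposition ell p q -> is_decomposition ell p q' ->
  forall i, (i < size ell)%N -> forall x : R, inI x -> q i x = q' i x.
Proof.
move=> q_dec q'_dec i i_lt x xI.
have [_ qE] := decomposition_normal_form hell q_dec i_lt.
have [_ q'E] := decomposition_normal_form hell q'_dec i_lt.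
have compn_eq y : inI y -> compn q (size ell) y = compn q' (size ell) y.
  by move=> yI; rewrite -q_dec.2 // q'_dec.2.
by rewrite qE // q'E // (compn_eq_crit_eq hell q_dec q'_dec (leqnn _) compn_eq i_lt).
Qed.
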